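(* In the category $\mathsf{Top}_0$ of T$_0$-spaces and continuous maps, a space is finitely generated with respect to embeddings if, and only if, it is finite.
   Context: An embedding is an injective continuous map $m:X\to Y$ such that every open set of $X$ has the form $m^{-1}(U)$ for some open $U\subseteq Y$. An object $X$ of a category $\mathcal{C}$ is finitely generated w.r.t. a class $\mathcal{M}$ of monomorphisms if for every directed diagram $(Z_i)_{i\in I}$ in $\mathcal{C}$ (indexed by a directed poset, i.e. every finite subset has an upper bound) whose connecting morphisms $z_{i,j}$ lie in $\mathcal{M}$, with colimit cocone $c_i:Z_i\to Z$ in $\mathcal{C}$, every morphism $f:X\to Z$ factorizes as $f=c_i\cdot g$ for some $i$ and $g:X\to Z_i$, and if also $f=c_i\cdot g'$ then $z_{i,j}\cdot g=z_{i,j}\cdot g'$ for some connecting morphism $z_{i,j}$. Here $\mathcal{M}$ is the class of morphisms of $\mathsf{Top}_0$ which are embeddings. *)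

From Stdlib Require Import List.

Record Top0 : Type := {
  pt :> Type;
  isOpen : (pt -> Prop) -> Prop;
  open_full : isOpen (fun _ => True);
  open_inter : forall U V, isOpen U -> isOpen V -> isOpen (fun x => U x /\ V x);
  open_union : forall F : (pt -> Prop) -> Prop,
      (forall U, F U -> isOpen U) -> isOpen (fun x => exists U, F U /\ U x);
  t0_sep : forall x y : pt, x <> y ->
      exists U, isOpen U /\ ~ (U x <-> U y)
}.

Definition continuous {X Y : Top0} (f : X -> Y) : Prop :=
  forall V, isOpen Y V -> isOpen X (fun x => V (f x)).

Definition embedding {X Y : Top0} (m : X -> Y) : Prop :=
  (forall x y, m x = m y -> x = y) /\ continuous m /\
  (forall U, isOpen X U -> exists V, isOpen Y V /\ forall x, U x <-> V (m x)).

Definition directed_poset {I : Type} (le : I -> I -> Prop) : Prop :=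
  (forall i, le i i) /\
  (forall i j k, le i j -> le j k -> le i k) /\
  (forall i j, le i j -> le j i -> i = j) /\
  (forall s : list I, exists j, forall i, In i s -> le i j).

Definition embedding_diagram {I : Type} (le : I -> I -> Prop)
  (Z : I -> Top0) (z : forall i j, le i j -> Z i -> Z j) : Prop :=
  (forall i j (h : le i j), embedding (z i j h)) /\
  (forall i (h : le i i) x, z i i h x = x) /\
  (forall i j k (hij : le i j) (hjk : le j k) (hik : le i k) x,
      z j k hjk (z i j hij x) = z i k hik x).

Definition is_colimit {I : Type} (le : I -> I -> Prop)
  (Z : I -> Top0) (z : forall i j, le i j -> Z i -> Z j)
  (C : Top0) (c : forall i, Z i -> C) : Prop :=
  (forall i, continuous (c i)) /\
  (forall i j (h : le i j) x, c j (z i j h x) = c i x) /\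
  (forall (Y : Top0) (d : forall i, Z i -> Y),
      (forall i, continuous (d i)) ->
      (forall i j (h : le i j) x, d j (z i j h x) = d i x) ->
      exists u : C -> Y, continuous u /\ (forall i x, u (c i x) = d i x) /\
        (forall u' : C -> Y, continuous u' -> (forall i x, u' (c i x) = d i x) ->
           forall y, u' y = u y)).

Definition fin_gen_emb (X : Top0) : Prop :=
  forall (I : Type) (le : I -> I -> Prop) (Z : I -> Top0)
         (z : forall i j, le i j -> Z i -> Z j) (C : Top0) (c : forall i, Z i -> C),
    directed_poset le -> embedding_diagram le Z z -> is_colimit le Z z C c ->
    (forall f : X -> C, continuous f ->
       exists i (g : X -> Z i), continuous g /\ forall x, f x = c i (g x)) /\
    (forall i (g g' : X -> Z i), continuous g -> continuous g' ->
       (forall x, c i (g x) = c i (g' x)) ->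
       exists j (h : le i j), forall x, z i j h (g x) = z i j h (g' x)).

Definition finite_space (X : Top0) : Prop :=
  exists s : list X, forall x : X, In x s.

From Stdlib Require Import List Arith Lia Classical ClassicalEpsilon
  FunctionalExtensionality PropExtensionality ProofIrrelevance.
From Stdlib Require Cantor.

(* A directed colimit of embeddings in Top0 is jointly surjective, and each
   colimit injection reflects the specialization order: a point a outside the
   closure of b is separated from b by an open set of the colimit, obtained by
   testing a compatible family of opens against Sierpinski-valued cocones.
   Hence a map from a finite space lands in one stage, and its corestriction
   is continuous because a finite space carries the Alexandrov topology of its
   specialization order.

   Conversely, let X be infinite with an injective sequence x_(i,j).  The map
   e : X -> S^N, e x n = [x not in cl {x_n}], into the Sierpinski cube is
   continuous and injective on the sequence.  Call B a sparse subset of S^N if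
   for almost every column i it contains e x_(i,j) for only finitely many j.
   S^N is the directed union of its sparse subspaces, with the colimit
   topology: S^N is first countable and every sequence has a subsequence whose
   range is sparse.  But e factors through no sparse subspace. *)

Lemma open_ext (X : Top0) (U V : X -> Prop) :
  isOpen X U -> (forall x, U x <-> V x) -> isOpen X V.
Proof.
  intros HU E. replace V with U; [exact HU |].
  apply functional_extensionality; intros x; apply propositional_extensionality, E.
Qed.

Lemma open_Union (X : Top0) (A : Type) (U : A -> X -> Prop) :
  (forall a, isOpen X (U a)) -> isOpen X (fun x => exists a, U a x).
Proof.
  intros HU. apply open_ext with (fun x => exists V, (exists a, V = U a) /\ V x).
  - apply open_union. intros V [a ->]. apply HU.
  - intros x; split.
    + intros [V [[a ->] Hx]]. eauto.
    + intros [a Hx]. eauto.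
Qed.

Lemma open_empty (X : Top0) : isOpen X (fun _ => False).
Proof.
  apply open_ext with (fun x => exists a : False, True).
  - apply (open_Union X False (fun _ _ => True)). intros [].
  - intros x; split; [intros [[] _] | intros []].
Qed.

Lemma open_impl (X : Top0) (P : Prop) (U : X -> Prop) :
  isOpen X U -> isOpen X (fun x => P -> U x).
Proof.
  intros HU. destruct (classic P) as [p | np].
  - apply open_ext with U; [exact HU | intros x; tauto].
  - apply open_ext with (fun _ => True); [apply open_full | intros x; tauto].
Qed.

Lemma open_Inter_le (X : Top0) (U : nat -> X -> Prop) (n : nat) :
  (forall k, isOpen X (U k)) -> isOpen X (fun x => forall k, k <= n -> U k x).
Proof.
  intros HU. induction n as [|n IH].
  - apply open_ext with (U 0); [apply HU |].
    intros x; split.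
    + intros Hx k Hk. replace k with 0 by lia. exact Hx.
    + intros Hx. apply Hx, le_n.
  - apply open_ext with (fun x => (forall k, k <= n -> U k x) /\ U (S n) x).
    + apply open_inter; [exact IH | apply HU].
    + intros x; split.
      * intros [Hn HS] k Hk.
        destruct (proj1 (Nat.le_succ_r k n) Hk) as [Hk' | ->]; auto.
      * intros Hx. split; [intros k Hk; apply Hx; lia | apply Hx, le_n].
Qed.

Lemma open_of_local (X : Top0) (U : X -> Prop) :
  (forall x, U x -> exists O, isOpen X O /\ O x /\ forall y, O y -> U y) ->
  isOpen X U.
Proof.
  intros H.
  apply open_ext with (fun x => exists O, (isOpen X O /\ forall y, O y -> U y) /\ O x).
  - apply open_union. intros O [HO _]. exact HO.
  - intros x; split.
    + intros [O [[_ HOU] Ox]]. auto.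
    + intros Ux. destruct (H x Ux) as [O [HO [Ox HOU]]]. eauto.
Qed.

Lemma continuous_comp (X Y W : Top0) (f : X -> Y) (g : Y -> W) :
  continuous f -> continuous g -> continuous (fun x => g (f x)).
Proof. intros Hf Hg V HV. exact (Hf _ (Hg V HV)). Qed.

Definition spec_le {X : Top0} (x y : X) : Prop :=
  forall U, isOpen X U -> U x -> U y.

Lemma spec_le_refl (X : Top0) (x : X) : spec_le x x.
Proof. intros U _ Ux. exact Ux. Qed.

Lemma spec_le_antisym (X : Top0) (x y : X) : spec_le x y -> spec_le y x -> x = y.
Proof.
  intros Hxy Hyx. apply NNPP; intros Hne.
  destruct (t0_sep X x y Hne) as [U [HU HUxy]].
  apply HUxy; split; [apply Hxy | apply Hyx]; exact HU.
Qed.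

Lemma not_spec_le (X : Top0) (x y : X) :
  ~ spec_le x y -> exists U, isOpen X U /\ U x /\ ~ U y.
Proof.
  intros H. apply NNPP; intros Hno. apply H. intros U HU Ux.
  apply NNPP; intros Uy. apply Hno; eauto.
Qed.

Lemma open_not_spec_le (X : Top0) (b : X) : isOpen X (fun y => ~ spec_le y b).
Proof.
  apply open_of_local. intros y Hy.
  destruct (not_spec_le X y b Hy) as [U [HU [Uy Ub]]].
  exists U. split; [exact HU | split; [exact Uy |]].
  intros y' Uy' Hy'b. exact (Ub (Hy'b U HU Uy')).
Qed.

Lemma continuous_spec_le (X Y : Top0) (f : X -> Y) (x y : X) :
  continuous f -> spec_le x y -> spec_le (f x) (f y).
Proof. intros Hf Hxy V HV. exact (Hxy _ (Hf V HV)). Qed.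

Lemma embedding_reflects_spec_le (X Y : Top0) (m : X -> Y) (x y : X) :
  embedding m -> spec_le (m x) (m y) -> spec_le x y.
Proof.
  intros [_ [_ Hm]] Hxy U HU Ux. destruct (Hm U HU) as [V [HV EV]].
  apply EV. apply Hxy; [exact HV | apply EV; exact Ux].
Qed.

Lemma finite_upset_open (X : Top0) (U : X -> Prop) :
  finite_space X -> (forall x y, U x -> spec_le x y -> U y) -> isOpen X U.
Proof.
  intros [s Hs] HU. apply open_of_local. intros x Ux.
  assert (Hl : forall l : list X,
             exists O, isOpen X O /\ O x /\ forall y, In y l -> O y -> U y).
  { induction l as [|y l [O [HO [Ox HOl]]]].
    - exists (fun _ => True). split; [apply open_full | split; [exact I | intros y []]].
    - destruct (classic (spec_le x y)) as [Hxy | Hxy].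
      + exists O. split; [exact HO | split; [exact Ox |]].
        intros y' [<- | Hy'] Oy'; [exact (HU x y Ux Hxy) | exact (HOl y' Hy' Oy')].
      + destruct (not_spec_le X x y Hxy) as [O' [HO' [O'x O'y]]].
        exists (fun w => O w /\ O' w).
        split; [apply open_inter; assumption | split; [split; assumption |]].
        intros y' [<- | Hy'] [Oy' O'y']; [contradiction | exact (HOl y' Hy' Oy')]. }
  destruct (Hl s) as [O [HO [Ox HOs]]].
  exists O. split; [exact HO | split; [exact Ox |]].
  intros y Oy. exact (HOs y (Hs y) Oy).
Qed.

Lemma sig_ext (A : Type) (P : A -> Prop) (p q : {x | P x}) :
  proj1_sig p = proj1_sig q -> p = q.
Proof.
  destruct p as [x Hx], q as [y Hy]; simpl; intros ->.
  f_equal. apply proof_irrelevance.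
Qed.

Definition subspace (X : Top0) (P : X -> Prop) : Top0.
Proof.
  refine {| pt := {x | P x};
            isOpen := fun U => exists V, isOpen X V /\ forall p, U p <-> V (proj1_sig p) |}.
  - exists (fun _ => True). split; [apply open_full | intros p; reflexivity].
  - intros U V [U' [HU' EU]] [V' [HV' EV]]. exists (fun x => U' x /\ V' x).
    split; [apply open_inter; assumption | intros p; rewrite EU, EV; reflexivity].
  - intros F HF.
    exists (fun x => exists V, (isOpen X V /\
                               exists U, F U /\ forall p, U p <-> V (proj1_sig p)) /\ V x).
    split.
    + apply open_union. intros V [HV _]. exact HV.
    + intros p; split.
      * intros [U [FU Up]]. destruct (HF U FU) as [V [HV EV]].
        exists V. split; [split; [exact HV | eauto] | apply EV; exact Up].
      * intros [V [[_ [U [FU EU]]] Vp]]. exists U. split; [exact FU | apply EU; exact Vp].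
  - intros p q Hpq.
    assert (Hne : proj1_sig p <> proj1_sig q) by (intros E; apply Hpq, sig_ext, E).
    destruct (t0_sep X _ _ Hne) as [V [HV NV]].
    exists (fun r => V (proj1_sig r)).
    split; [exists V; split; [exact HV | intros r; reflexivity] | exact NV].
Defined.

Lemma subspace_val_continuous (X : Top0) (P : X -> Prop) :
  continuous (fun p : subspace X P => proj1_sig p).
Proof. intros V HV. exists V. split; [exact HV | intros p; reflexivity]. Qed.

Definition subspace_incl (X : Top0) (P Q : X -> Prop) (h : forall x, P x -> Q x)
  (p : subspace X P) : subspace X Q :=
  exist Q (proj1_sig p) (h _ (proj2_sig p)).

Lemma subspace_incl_embedding (X : Top0) (P Q : X -> Prop) (h : forall x, P x -> Q x) :
  embedding (subspace_incl X P Q h).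
Proof.
  split; [| split].
  - intros p q E. apply sig_ext. exact (f_equal (@proj1_sig _ _) E).
  - intros V [V' [HV' EV]]. exists V'. split; [exact HV' | intros p; exact (EV _)].
  - intros U [V [HV EV]]. exists (fun q => V (proj1_sig q)).
    split; [exists V; split; [exact HV | intros q; reflexivity] | exact EV].
Qed.

Definition sierpinski : Top0.
Proof.
  refine {| pt := bool; isOpen := fun U => U false -> U true |}.
  - intros _. exact I.
  - intros U V HU HV [Uf Vf]. split; auto.
  - intros F HF [U [FU Uf]]. exists U. split; [exact FU | exact (HF U FU Uf)].
  - intros x y Hxy. exists (fun b => b = true). split; [reflexivity |].
    destruct x, y; try congruence; intros E;
      [discriminate (proj1 E eq_refl) | discriminate (proj2 E eq_refl)].
Defined.

Lemma sierpinski_continuous (X : Top0) (f : X -> sierpinski) :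
  isOpen X (fun x => f x = true) -> continuous f.
Proof.
  intros Hf V HV.
  destruct (classic (V false)) as [Vf | Vf]; [| destruct (classic (V true)) as [Vt | Vt]].
  - apply open_ext with (fun _ => True); [apply open_full |].
    intros x; split; [intros _ | tauto]. destruct (f x); [exact (HV Vf) | exact Vf].
  - apply open_ext with (fun x => f x = true); [exact Hf |].
    intros x; split; [intros -> | intros Vx]; [exact Vt |].
    destruct (f x); [reflexivity | contradiction].
  - apply open_ext with (fun _ => False); [apply open_empty |].
    intros x; split; [intros [] |]. destruct (f x); tauto.
Qed.

Section DirectedColimit.

Variables (I : Type) (le : I -> I -> Prop) (Z : I -> Top0)
  (z : forall i j, le i j -> Z i -> Z j) (C : Top0) (c : forall i, Z i -> C).
Hypotheses (Hdir : directed_poset le) (Hdiag : embedding_diagram le Z z)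
  (Hcolim : is_colimit le Z z C c).

Lemma colimit_open_of_compatible (U : forall i, Z i -> Prop) :
  (forall i, isOpen (Z i) (U i)) ->
  (forall i j (h : le i j) x, U j (z i j h x) <-> U i x) ->
  exists W, isOpen C W /\ forall i x, W (c i x) <-> U i x.
Proof.
  intros HU HUz. pose proof Hcolim as [_ [_ Huniv]].
  set (d := fun i x =>
              (if excluded_middle_informative (U i x) then true else false) : sierpinski).
  assert (Hd : forall i x, d i x = true <-> U i x).
  { intros i x. unfold d.
    destruct excluded_middle_informative as [Hx | Hx]; split; intros H;
      solve [auto | discriminate | contradiction]. }
  destruct (Huniv sierpinski d) as [u [Hu [Huc _]]].
  - intros i. apply sierpinski_continuous.
    apply open_ext with (U i); [apply HU | intros x; symmetry; apply Hd].
  - intros i j h x. apply Bool.eq_true_iff_eq. rewrite !Hd. apply HUz.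
  - exists (fun y => u y = true). split.
    + exact (Hu (fun b => b = true) (fun _ => eq_refl)).
    + intros i x. rewrite Huc. apply Hd.
Qed.

(* The cocone factors through the subspace spanned by its images, and the
   composite C -> image -> C is the identity by uniqueness. *)
Lemma colimit_jointly_surjective (y : C) : exists i x, c i x = y.
Proof.
  pose proof Hcolim as [Hc [Hcz Huniv]].
  set (P := fun y : C => exists i x, c i x = y).
  set (d := fun i x => exist P (c i x) (ex_intro _ i (ex_intro _ x eq_refl)) : subspace C P).
  destruct (Huniv (subspace C P) d) as [u [Hu [Hud _]]].
  - intros i V [V' [HV' EV]].
    apply open_ext with (fun x => V' (c i x)); [apply Hc, HV' | intros x; symmetry; apply EV].
  - intros i j h x. apply sig_ext. apply Hcz.
  - destruct (Huniv C c Hc Hcz) as [v [_ [_ Hv]]].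
    assert (Hval : forall y, proj1_sig (u y) = v y).
    { apply Hv.
      - exact (continuous_comp _ _ _ u _ Hu (subspace_val_continuous C P)).
      - intros i x. rewrite Hud. reflexivity. }
    assert (Hself : forall y, y = v y).
    { apply (Hv (fun y => y)); [intros V HV; exact HV | reflexivity]. }
    destruct (proj2_sig (u y)) as [i [x Ex]].
    exists i, x. rewrite Ex, Hval. symmetry. apply Hself.
Qed.

Lemma colimit_stage_of_list (l : list C) :
  exists i, forall y, In y l -> exists x, c i x = y.
Proof.
  pose proof Hdir as [_ [_ [_ Hub]]]. pose proof Hcolim as [_ [Hcz _]].
  induction l as [|y l [i Hi]].
  - destruct (Hub nil) as [i _]. exists i. intros y [].
  - destruct (colimit_jointly_surjective y) as [k [w Hw]].
    destruct (Hub (i :: k :: nil)) as [m Hm].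
    assert (him : le i m) by (apply Hm; simpl; auto).
    assert (hkm : le k m) by (apply Hm; simpl; auto).
    exists m. intros y' [<- | Hy'].
    + exists (z k m hkm w). rewrite Hcz. exact Hw.
    + destruct (Hi y' Hy') as [x Hx]. exists (z i m him x). rewrite Hcz. exact Hx.
Qed.

(* If a is not below b, the points of the stages that are eventually not below
   the image of b form a compatible family of opens. *)
Lemma colimit_reflects_spec_le (i : I) (a b : Z i) :
  spec_le (c i a) (c i b) -> spec_le a b.
Proof.
  pose proof Hdir as [Hrefl [Htrans [_ Hub]]]. pose proof Hdiag as [Hemb [Hid Hcomp]].
  intros Hcab. apply NNPP; intros Hab.
  set (U := fun j (x : Z j) => exists k (hjk : le j k) (hik : le i k),
              ~ spec_le (z j k hjk x) (z i k hik b)).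
  destruct (colimit_open_of_compatible U) as [W [HW EW]].
  - intros j. apply open_Union; intros k. apply open_Union; intros hjk.
    apply open_Union; intros hik.
    destruct (Hemb j k hjk) as [_ [Hcont _]]. exact (Hcont _ (open_not_spec_le _ _)).
  - intros j k h x; split.
    + intros [m [hkm [him Hm]]]. exists m, (Htrans _ _ _ h hkm), him.
      rewrite <- (Hcomp j k m h hkm). exact Hm.
    + intros [m [hjm [him Hm]]].
      destruct (Hub (k :: m :: nil)) as [n Hn].
      assert (hkn : le k n) by (apply Hn; simpl; auto).
      assert (hmn : le m n) by (apply Hn; simpl; auto).
      exists n, hkn, (Htrans _ _ _ him hmn).
      rewrite (Hcomp j k n h hkn (Htrans _ _ _ hjm hmn)), <- (Hcomp j m n hjm hmn),
        <- (Hcomp i m n him hmn).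
      intros Hn'. exact (Hm (embedding_reflects_spec_le _ _ _ _ _ (Hemb m n hmn) Hn')).
  - assert (Ua : U i a) by (exists i, (Hrefl i), (Hrefl i); rewrite !Hid; exact Hab).
    destruct (proj1 (EW i b) (Hcab W HW (proj2 (EW i a) Ua))) as [k [h1 [h2 Hk]]].
    rewrite (proof_irrelevance _ h1 h2) in Hk. exact (Hk (spec_le_refl _ _)).
Qed.

Lemma colimit_injective (i : I) (a b : Z i) : c i a = c i b -> a = b.
Proof.
  intros E.
  apply spec_le_antisym; apply colimit_reflects_spec_le; rewrite E; apply spec_le_refl.
Qed.

End DirectedColimit.

Lemma finite_fin_gen_emb (X : Top0) : finite_space X -> fin_gen_emb X.
Proof.
  intros Hfin I le Z z C c Hdir Hdiag Hcolim. split.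
  - intros f Hf. pose proof Hfin as [s Hs].
    destruct (colimit_stage_of_list I le Z z C c Hdir Hcolim (map f s)) as [i Hi].
    destruct (choice (fun x w => c i w = f x)) as [g Hg].
    { intros x. apply Hi, in_map, Hs. }
    exists i, g. split; [| intros x; symmetry; apply Hg].
    intros V HV. apply finite_upset_open; [exact Hfin |].
    intros x y Vx Hxy.
    assert (Hg_le : spec_le (g x) (g y)).
    { apply (colimit_reflects_spec_le I le Z z C c Hdir Hdiag Hcolim).
      rewrite !Hg. apply continuous_spec_le; assumption. }
    exact (Hg_le V HV Vx).
  - intros i g g' _ _ E. pose proof Hdir as [Hrefl _]. pose proof Hdiag as [_ [Hid _]].
    exists i, (Hrefl i). intros x. rewrite !Hid.
    exact (colimit_injective I le Z z C c Hdir Hdiag Hcolim i _ _ (E x)).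
Qed.

Definition nbhd_le (n : nat) (p q : nat -> Prop) : Prop :=
  forall k, k <= n -> p k -> q k.

(* The product of countably many Sierpinski spaces, with the sets [nbhd_le n p]
   as a neighbourhood base at p. *)
Definition cube : Top0.
Proof.
  refine {| pt := nat -> Prop;
            isOpen := fun W => forall p, W p -> exists n, forall q, nbhd_le n p q -> W q |}.
  - intros p _. exists 0. intros q _. exact I.
  - intros U V HU HV p [Up Vp].
    destruct (HU p Up) as [n1 H1], (HV p Vp) as [n2 H2]. exists (max n1 n2).
    intros q Hq. split; [apply H1 | apply H2]; intros k Hk; apply Hq; lia.
  - intros F HF p [U [FU Up]]. destruct (HF U FU p Up) as [n Hn].
    exists n. intros q Hq. exists U. auto.
  - intros p q Hpq.
    assert (Hk : exists k, ~ (p k <-> q k)).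
    { apply not_all_ex_not. intros H. apply Hpq, functional_extensionality.
      intros k. apply propositional_extensionality, H. }
    destruct Hk as [k Hk]. exists (fun r => r k). split; [| exact Hk].
    intros r rk. exists k. intros q' Hq'. apply Hq'; [apply le_n | exact rk].
Defined.

Lemma cube_continuous (X : Top0) (f : X -> cube) :
  (forall k, isOpen X (fun x => f x k)) -> continuous f.
Proof.
  intros Hf W HW. apply open_of_local. intros x Wx. destruct (HW _ Wx) as [n Hn].
  exists (fun y => nbhd_le n (f x) (f y)). split; [| split].
  - apply (open_Inter_le X (fun k y => f x k -> f y k) n).
    intros k. apply open_impl, Hf.
  - intros k _ H. exact H.
  - intros y Hy. exact (Hn _ Hy).
Qed.

Definition cube_map {X : Top0} (s : nat -> X) (x : X) : cube :=
  fun n => ~ spec_le x (s n).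

Lemma cube_map_continuous (X : Top0) (s : nat -> X) : continuous (cube_map s).
Proof. apply cube_continuous. intros k. apply open_not_spec_le. Qed.

Lemma cube_map_separates (X : Top0) (s : nat -> X) (a b : nat) :
  cube_map s (s a) = cube_map s (s b) -> s a = s b.
Proof.
  assert (Hle : forall a b, cube_map s (s a) = cube_map s (s b) -> spec_le (s a) (s b)).
  { intros a' b' E. apply NNPP; intros H.
    assert (Hb : cube_map s (s b') b') by (rewrite <- E; exact H).
    exact (Hb (spec_le_refl _ _)). }
  intros E. apply spec_le_antisym; apply Hle; [exact E | symmetry; exact E].
Qed.

Fixpoint fresh_prefix {A : Type} (next : list A -> A) (n : nat) : list A :=
  match n with
  | 0 => nil
  | S n => next (fresh_prefix next n) :: fresh_prefix next n
  end.

Lemma infinite_injective_seq (A : Type) :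
  (forall l : list A, exists x, ~ In x l) ->
  exists s : nat -> A, forall a b, s a = s b -> a = b.
Proof.
  intros H. destruct (choice _ H) as [next Hnext].
  exists (fun n => next (fresh_prefix next n)).
  assert (Hin : forall a b, a < b -> In (next (fresh_prefix next a)) (fresh_prefix next b)).
  { intros a b. induction b as [|b IH]; intros Hab; [lia |]. simpl.
    destruct (Nat.eq_dec a b) as [-> | Hne]; [left; reflexivity | right; apply IH; lia]. }
  intros a b E. destruct (Nat.lt_trichotomy a b) as [Hab | [Hab | Hba]]; [| exact Hab |].
  - exfalso. apply (Hnext (fresh_prefix next b)). rewrite <- E. apply Hin, Hab.
  - exfalso. apply (Hnext (fresh_prefix next a)). rewrite E. apply Hin, Hba.
Qed.

Definition column_bounded (P : nat * nat -> Prop) (i : nat) : Prop :=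
  exists bd, forall j, P (i, j) -> j <= bd.

Definition sparse (P : nat * nat -> Prop) : Prop :=
  exists m, forall i, m <= i -> column_bounded P i.

Lemma sparse_sub (P Q : nat * nat -> Prop) :
  sparse Q -> (forall k, P k -> Q k) -> sparse P.
Proof.
  intros [m Hm] HPQ. exists m. intros i Hi.
  destruct (Hm i Hi) as [bd Hbd]. exists bd. auto.
Qed.

Lemma sparse_union (P Q : nat * nat -> Prop) :
  sparse P -> sparse Q -> sparse (fun k => P k \/ Q k).
Proof.
  intros [m1 H1] [m2 H2]. exists (max m1 m2). intros i Hi.
  destruct (H1 i) as [b1 Hb1]; [lia |]. destruct (H2 i) as [b2 Hb2]; [lia |].
  exists (max b1 b2). intros j [Pj | Qj]; [specialize (Hb1 j Pj) | specialize (Hb2 j Qj)]; lia.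
Qed.

Lemma sparse_subsingleton (P : nat * nat -> Prop) :
  (forall k k', P k -> P k' -> k = k') -> sparse P.
Proof.
  intros HP. exists 0. intros i _.
  destruct (classic (exists j, P (i, j))) as [[j0 Hj0] | Hno].
  - exists j0. intros j Hj. assert (E : (i, j) = (i, j0)) by (apply HP; assumption).
    injection E as ->. apply le_n.
  - exists 0. intros j Hj. exfalso. eauto.
Qed.

Lemma sparse_column (P : nat * nat -> Prop) (i : nat) :
  (forall i' j, P (i', j) -> i' = i) -> sparse P.
Proof.
  intros HP. exists (S i). intros i' Hi'. exists 0. intros j Hj.
  apply HP in Hj. lia.
Qed.

Lemma not_sparse_full : ~ sparse (fun _ => True).
Proof.
  intros [m Hm]. destruct (Hm m (le_n m)) as [bd Hbd].
  specialize (Hbd (S bd) I). lia.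
Qed.

Lemma functional_image_bounded (R : nat -> nat -> Prop) :
  (forall n j j', R n j -> R n j' -> j = j') ->
  forall b, exists bd, forall n j, n < b -> R n j -> j <= bd.
Proof.
  intros Hfun b. induction b as [|b [bd Hbd]].
  - exists 0. intros n j Hn. lia.
  - destruct (classic (exists j, R b j)) as [[jb Hjb] | Hno].
    + exists (max bd jb). intros n j Hn Hj. destruct (Nat.eq_dec n b) as [-> | Hne].
      * rewrite (Hfun b j jb Hj Hjb). lia.
      * specialize (Hbd n j ltac:(lia) Hj). lia.
    + exists bd. intros n j Hn Hj. destruct (Nat.eq_dec n b) as [-> | Hne].
      * exfalso. eauto.
      * apply (Hbd n j); [lia | exact Hj].
Qed.

(* Either infinitely many n hit a single column, or every column is hit by
   finitely many n, each hitting at most one point. *)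
Lemma sparse_subsequence (R : nat -> nat * nat -> Prop) :
  (forall n k k', R n k -> R n k' -> k = k') ->
  exists M : nat -> Prop, (forall m, exists n, m <= n /\ M n) /\
    sparse (fun k => exists n, M n /\ R n k).
Proof.
  intros Hfun.
  destruct (classic (exists i, forall m, exists n, m <= n /\ exists j, R n (i, j)))
    as [[i Hi] | Hno].
  - exists (fun n => exists j, R n (i, j)). split; [exact Hi |].
    apply sparse_column with i. intros i' j [n [[j' Hj'] Hn]].
    pose proof (Hfun n _ _ Hn Hj'). congruence.
  - exists (fun _ => True). split; [intros m; exists m; split; [apply le_n | exact I] |].
    exists 0. intros i _.
    assert (Hb : exists b, forall n j, R n (i, j) -> n < b).
    { apply NNPP; intros Hb. apply Hno. exists i. intros m.
      apply NNPP; intros Hm. apply Hb. exists m. intros n j Hn.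
      apply NNPP; intros Hnm. apply Hm. exists n. split; [lia | eauto]. }
    destruct Hb as [b Hb].
    destruct (functional_image_bounded (fun n j => R n (i, j))) with b as [bd Hbd].
    { intros n j j' Hj Hj'. pose proof (Hfun n _ _ Hj Hj'). congruence. }
    exists bd. intros j [n [_ Hn]]. exact (Hbd n j (Hb n j Hn) Hn).
Qed.

(* If W is not open at p, pick a_n in the n-th basic neighbourhood of p
   outside W; p together with a sparse subsequence of (a_n) violates the
   hypothesis. *)
Lemma cube_open_of_sparse_traces (d : nat * nat -> cube) (W : cube -> Prop) :
  (forall k k', d k = d k' -> k = k') ->
  (forall B : cube -> Prop, sparse (fun k => B (d k)) ->
     exists V, isOpen cube V /\ forall y, B y -> (W y <-> V y)) ->
  isOpen cube W.
Proof.
  intros Hd HW p Wp. apply NNPP; intros Hp.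
  assert (Ha : forall n, exists q, nbhd_le n p q /\ ~ W q).
  { intros n. apply NNPP; intros Hn. apply Hp. exists n. intros q Hq.
    apply NNPP; intros Wq. apply Hn. eauto. }
  destruct (choice _ Ha) as [a Ha'].
  destruct (sparse_subsequence (fun n k => a n = d k)) as [M [HM Hsparse]].
  { intros n k k' E E'. apply Hd. congruence. }
  destruct (HW (fun y => y = p \/ exists n, M n /\ a n = y)) as [V [HV EV]].
  { apply sparse_union; [| exact Hsparse].
    apply sparse_subsingleton. intros k k' E E'. apply Hd. congruence. }
  destruct (HV p (proj1 (EV p (or_introl eq_refl)) Wp)) as [m Hm].
  destruct (HM m) as [n [Hmn Mn]]. destruct (Ha' n) as [Hpn Wn].
  apply Wn, EV; [right; eauto |].
  apply Hm. intros k Hk. apply Hpn. lia.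
Qed.

Section SparseSubspaces.

Variable d : nat * nat -> cube.
Hypothesis d_inj : forall k k', d k = d k' -> k = k'.

Definition sparse_set (B : cube -> Prop) : Prop := sparse (fun k => B (d k)).

Definition sparse_index : Type := {B : cube -> Prop | sparse_set B}.

Definition sparse_le (B B' : sparse_index) : Prop :=
  forall y, proj1_sig B y -> proj1_sig B' y.

Definition sparse_stage (B : sparse_index) : Top0 := subspace cube (proj1_sig B).

Definition sparse_incl (B B' : sparse_index) (h : sparse_le B B') :
  sparse_stage B -> sparse_stage B' :=
  subspace_incl cube _ _ h.

Definition sparse_cocone (B : sparse_index) (p : sparse_stage B) : cube := proj1_sig p.

Lemma sparse_directed : directed_poset sparse_le.
Proof.
  split; [| split; [| split]].
  - intros B y Hy. exact Hy.
  - intros B1 B2 B3 h12 h23 y Hy. auto.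
  - intros B B' h h'. apply sig_ext, functional_extensionality. intros y.
    apply propositional_extensionality. split; auto.
  - intros l.
    assert (Hl : sparse_set (fun y => exists B, In B l /\ proj1_sig B y)).
    { induction l as [|B l IH].
      - apply sparse_subsingleton. intros k k' [B [[] _]].
      - apply sparse_sub
          with (fun k => proj1_sig B (d k) \/ exists B', In B' l /\ proj1_sig B' (d k)).
        + apply sparse_union; [exact (proj2_sig B) | exact IH].
        + intros k [B' [[<- | HB'] Hk]]; [left | right; exists B']; auto. }
    exists (exist _ _ Hl). intros B HB y Hy. simpl. eauto.
Qed.

Lemma sparse_embedding_diagram : embedding_diagram sparse_le sparse_stage sparse_incl.
Proof.
  split; [| split].
  - intros B B' h. apply subspace_incl_embedding.
  - intros B h p. apply sig_ext. reflexivity.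
  - intros B1 B2 B3 h12 h23 h13 p. apply sig_ext. reflexivity.
Qed.

Lemma sparse_colimit :
  is_colimit sparse_le sparse_stage sparse_incl cube sparse_cocone.
Proof.
  split; [| split].
  - intros B. apply subspace_val_continuous.
  - intros B B' h p. reflexivity.
  - intros Y e He Hecomp.
    assert (Hsingle : forall y : cube, sparse_set (fun q => q = y)).
    { intros y. apply sparse_subsingleton. intros k k' E E'. apply d_inj. congruence. }
    set (single := fun y => exist sparse_set (fun q => q = y) (Hsingle y)).
    set (u := fun y => e (single y) (exist _ y eq_refl)).
    assert (Hu : forall B (p : sparse_stage B), u (proj1_sig p) = e B p).
    { intros B [y Hy]. simpl.
      assert (h : sparse_le (single y) B) by (intros q Eq; simpl in Eq; subst q; exact Hy).
      unfold u. rewrite <- (Hecomp _ _ h). f_equal. apply sig_ext. reflexivity. }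
    exists u. split; [| split].
    + intros V HV. apply (cube_open_of_sparse_traces d); [exact d_inj |].
      intros B HB. destruct (He (exist _ B HB) V HV) as [V' [HV' EV']].
      exists V'. split; [exact HV' |]. intros y By.
      change (V (u y) <-> V' y). rewrite (Hu (exist _ B HB) (exist _ y By) : u y = _).
      exact (EV' (exist _ y By)).
    + intros B p. apply Hu.
    + intros u' _ Hu' y. exact (Hu' (single y) (exist _ y eq_refl)).
Qed.

End SparseSubspaces.

Lemma infinite_not_fin_gen_emb (X : Top0) : ~ finite_space X -> ~ fin_gen_emb X.
Proof.
  intros Hinf Hfg.
  destruct (infinite_injective_seq X) as [s Hs].
  { intros l. apply NNPP; intros Hl. apply Hinf. exists l.
    intros x. apply NNPP; intros Hx. apply Hl. eauto. }
  set (d := fun k => cube_map s (s (Cantor.to_nat k))).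
  assert (d_inj : forall k k', d k = d k' -> k = k').
  { intros k k' E. apply Cantor.to_nat_inj, Hs. exact (cube_map_separates X s _ _ E). }
  destruct (Hfg _ _ _ _ _ _ (sparse_directed d) (sparse_embedding_diagram d)
              (sparse_colimit d d_inj)) as [Hfactor _].
  destruct (Hfactor (cube_map s) (cube_map_continuous X s)) as [B [g [_ Hg]]].
  apply not_sparse_full, sparse_sub with (fun k => proj1_sig B (d k));
    [exact (proj2_sig B) |].
  intros k _. unfold d. rewrite Hg. exact (proj2_sig (g _)).
Qed.

Theorem theorem5p5 : forall X : Top0, fin_gen_emb X <-> finite_space X.
Proof.
  intros X. split.
  - intros Hfg. apply NNPP. intros Hinf. exact (infinite_not_fin_gen_emb X Hinf Hfg).
  - apply finite_fin_gen_emb.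
Qed.
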